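(* Let $H$ be a digraph with at least two vertices and $r\in V(H)$ such that every vertex of $H$ is reachable from $r$, and let $(\hat T,\{B_x\}_{x\in V(\hat T)})$ be the $r$-rooted cut decomposition of $H$. For every vertex $u\in V(H)$ and every set $X\subseteq V(H)\setminus(V(\hat T)\cup\{u\})$ there exists a directed path $P$ from $r$ to $u$ in $H$ with $|V(P)\cap X|\le |X|/2$.
   Context: Digraphs are finite and without loops; paths are directed. A vertex $v$ is bi-reachable from $r$ if there are two internally vertex-disjoint directed paths from $r$ to $v$. For a digraph $H$ with at least two vertices and $r\in V(H)$ such that every vertex of $H$ is reachable from $r$, the diblock $B_r$ of $r$ in $H$ is the set of all vertices bi-reachable from $r$, together with $r$ and all out-neighbours of $r$. For $x\in B_r\setminus\{r\}$ let $X_x$ be the set of vertices $v\in V(H)\setminus B_r$ such that every directed $r$–$v$ path intersects $B_r$ for the last time in $x$; $x$ is a bottleneck of $B_r$ if $X_x\ne\emptyset$ (the sets $X_x$ partition $V(H)\setminus B_r$). The $r$-rooted cut decomposition $(\hat T,\{B_x\}_{x\in V(\hat T)})$ of $H$ is defined recursively: $\hat T$ is a rooted tree with root $r$ and $V(\hat T)\subseteq V(H)$; the set associated with the root is $B_r$; the children of $r$ are the bottlenecks of $B_r$; and for each bottleneck $x$, the subtree of $\hat T$ rooted at $x$ together with its associated sets is the $x$-rooted cut decomposition of the induced subgraph $H[X_x\cup\{x\}]$. *)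

(* Digraph H = (T, e) with T : finType (vertex set), e : rel T
   (arc relation). Vertex subsets of the current (induced) subgraph are
   Prop-valued predicates S : T -> Prop. *)
From mathcomp Require Import all_boot.
Set Implicit Arguments. Unset Strict Implicit. Unset Printing Implicit Defensive.

Section Digraph.
Variables (T : finType) (e : rel T).

(* A directed path a :: p from a to b in the induced subgraph H[S]:
   consecutive vertices joined by arcs, ends at b, no repeated vertex,
   all vertices in S.  V(P) = a :: p. *)
Definition dpath (S : T -> Prop) (a b : T) (p : seq T) : Prop :=
  [/\ path e a p, last a p = b, uniq (a :: p) & forall v, v \in a :: p -> S v].

Definition interior (a b : T) (p : seq T) (v : T) : Prop :=
  v \in a :: p /\ v <> a /\ v <> b.

Definition bireach (S : T -> Prop) (r v : T) : Prop :=
  exists p q, [/\ dpath S r v p, dpath S r v q, p <> q &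
    forall w, interior r v p w -> interior r v q w -> False].

Definition diblock (S : T -> Prop) (r v : T) : Prop :=
  S v /\ (v = r \/ e r v \/ bireach S r v).

Definition last_in (B : T -> Prop) (r : T) (p : seq T) (x : T) : Prop :=
  exists p1 p2, [/\ r :: p = p1 ++ x :: p2, B x & forall w, w \in p2 -> ~ B w].

Definition Xset (S : T -> Prop) (r x v : T) : Prop :=
  [/\ S v, ~ diblock S r v &
    forall p, dpath S r v p -> last_in (diblock S r) r p x].

Definition bottleneck (S : T -> Prop) (r x : T) : Prop :=
  [/\ diblock S r x, x <> r & exists v, Xset S r x v].

(* tree_vertex S r v : v is a vertex of the tree of the r-rooted cut
   decomposition of H[S] (defined recursively: the root r, and the vertices
   of the x-rooted cut decompositions of H[X_x + x] for the bottlenecks x). *)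
Inductive tree_vertex : (T -> Prop) -> T -> T -> Prop :=
| tv_root S r : tree_vertex S r r
| tv_child S r x v : bottleneck S r x ->
    tree_vertex (fun w => Xset S r x w \/ w = x) x v -> tree_vertex S r v.

End Digraph.

(* If [u] lies in the diblock [B_r], it has two internally disjoint [r]-[u]
   paths; [X] avoids [r] and [u], so one of them meets at most half of the
   vertices of [X] on their union.  Otherwise all [r]-[u] paths leave [B_r] for
   the last time at the same bottleneck [x]: two different exits towards a
   common vertex would leave no vertex separating it from [r], so by Menger's
   theorem it would be bi-reachable.  Thus [u] lies in [X_x], and no [r]-[x]
   path enters [X_x].  Follow the better of two disjoint [r]-[x] paths, then a
   path from [x] to [u] inside [H[X_x + x]] given by induction for the part of
   [X] off those two paths. *)

From mathcomp Require Import all_boot zify.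
From Stdlib Require Import Classical.
Set Implicit Arguments. Unset Strict Implicit. Unset Printing Implicit Defensive.

Section CutDecomposition.
Variable T : finType.
Implicit Types (e : rel T) (S : T -> Prop) (p q : seq T).

Lemma split_at (x : T) p : x \in p -> exists p1 p2, p = p1 ++ x :: p2.
Proof. by case/splitPr => p1 p2; exists p1, p2. Qed.

Lemma split_first (a : pred T) p : has a p ->
  exists x p1 p2, [/\ p = rcons p1 x ++ p2, a x & ~~ has a p1].
Proof. by case/split_find => x p1 p2 ax hp1; exists x, p1, p2. Qed.

Lemma mem_last_nonnil (x : T) p : p != [::] -> last x p \in p.
Proof. by case: p => [//|y p] _ /=; exact: mem_last. Qed.

Lemma dpath_end e S a b p : dpath e S a b p -> S b.
Proof. by case=> _ <- _ hS; apply/hS/mem_last. Qed.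

Lemma dpath_weaken e S S' a b p : (forall v, S v -> S' v) ->
  dpath e S a b p -> dpath e S' a b p.
Proof. by move=> hSS' [hp hl hu hS]; split=> // v /hS /hSS'. Qed.

Lemma dpath_shorten e S a p : path e a p -> (forall v, v \in a :: p -> S v) ->
  exists2 p', dpath e S a (last a p) p' & {subset p' <= p}.
Proof.
move=> hp hS; case: (shortenP hp) => p' hp' hu hsub.
exists p' => //; split=> // v; rewrite inE => /orP [/eqP -> | /hsub hv];
  by apply: hS; rewrite inE ?eqxx ?hv ?orbT.
Qed.

Lemma dpath_extend e S a b c p q : dpath e S a b p -> path e b q ->
  last b q = c -> (forall v, v \in q -> S v) ->
  exists2 p', dpath e S a c p' & {subset p' <= p ++ q}.
Proof.
case=> hp hl _ hS hq <- hSq.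
have hw : path e a (p ++ q) by rewrite cat_path hp hl hq.
have := dpath_shorten hw; rewrite last_cat hl; apply.
move=> v; rewrite -cat_cons mem_cat => /orP [/hS // | /hSq //].
Qed.

Lemma dpath_cat e S a b c p q : dpath e S a b p -> dpath e S b c q ->
  (forall v, v \in q -> v \notin a :: p) -> dpath e S a c (p ++ q).
Proof.
case=> hp hl hu hS [hq hlq huq hSq] hdis; split.
- by rewrite cat_path hp hl hq.
- by rewrite last_cat hl hlq.
- rewrite -cat_cons cat_uniq hu /=; apply/andP; split.
  + by apply/hasPn => v /hdis.
  + by case/andP: huq.
- move=> v; rewrite -cat_cons mem_cat => /orP [/hS //|hv].
  by apply: hSq; rewrite inE hv orbT.
Qed.

Lemma path_suffix e a p p1 x p2 : a :: p = p1 ++ x :: p2 -> path e a p ->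
  [/\ path e x p2, last x p2 = last a p & {subset x :: p2 <= a :: p}].
Proof.
case: p1 => [|y p1] /=; first by case=> <- <- hp; split.
case=> _ ->; rewrite cat_path last_cat => /andP [_ /= /andP [_ hp2]].
by split=> // v hv; rewrite inE mem_cat hv !orbT.
Qed.

Lemma dpath_arc e S a b : e a b -> S a -> S b -> a != b -> dpath e S a b [:: b].
Proof.
move=> hab ha hb hne; split=> //=; first by rewrite hab.
  by rewrite inE hne.
by move=> v; rewrite !inE => /orP [] /eqP ->.
Qed.

Lemma dpath_head e S a b p : dpath e S a b p -> a != b ->
  exists c q, [/\ p = c :: q, e a c, S c & c != a].
Proof.
case: p => [|c q] [hp hl hu hS] hab; first by rewrite /= in hl; rewrite hl eqxx in hab.
exists c, q; split=> //; first by case/andP: hp.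
  by apply: hS; rewrite !inE eqxx orbT.
by case/andP: hu; rewrite inE negb_or eq_sym => /andP [].
Qed.

Lemma dpath_mem_last e S a b p : dpath e S a b p -> a != b -> b \in p.
Proof.
move=> hp /(dpath_head hp) [c [q [hpe _ _ _]]]; subst p.
case: hp => _ <- _ _ /=; exact: mem_last.
Qed.

Definition two_paths e S a b := exists p q,
  [/\ dpath e S a b p, dpath e S a b q & forall v, v \in p -> v \in q -> v = b].

Lemma walks_two_paths e S a b p q : path e a p -> path e a q ->
  last a p = b -> last a q = b ->
  (forall v, v \in a :: p -> S v) -> (forall v, v \in a :: q -> S v) ->
  (forall v, v \in p -> v \in q -> v = b) -> two_paths e S a b.
Proof.
move=> hp hq hlp hlq hSp hSq hd.
have [p' hp' sp] := dpath_shorten hp hSp; have [q' hq' sq] := dpath_shorten hq hSq.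
rewrite hlp in hp'; rewrite hlq in hq'.
by exists p', q'; split=> // v /sp h /sq h'; apply: hd h h'.
Qed.

Lemma arc_two_paths e S a b : e a b -> S a -> S b -> two_paths e S a b.
Proof.
move=> hab ha hb; apply: (@walks_two_paths e S a b [:: b] [:: b]) => //=.
1,2: by rewrite hab.
1,2: by move=> v; rewrite !inE => /orP [] /eqP ->.
by move=> v; rewrite inE => /eqP.
Qed.

Lemma diblock_root e S r : S r -> diblock e S r r.
Proof. by split=> //; left. Qed.

Lemma diblock_two_paths e S r x : S r -> diblock e S r x -> two_paths e S r x.
Proof.
move=> hr [hx [->|[hrx|[p [q [hp hq _ hint]]]]]].
- by apply: (@walks_two_paths e S r r [::] [::]) => // v; rewrite inE => /eqP ->.
- exact: arc_two_paths.
- exists p, q; split=> // v hvp hvq.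
  have [//|hvx] := eqVneq v x; exfalso.
  have hvr : v <> r by move=> hvr; case: hp => _ _ /andP [/negP + _]; rewrite -hvr.
  by apply: (hint v); split; rewrite ?inE ?hvp ?hvq ?orbT //; split=> //; apply/eqP.
Qed.

Lemma two_paths_diblock e S r w : two_paths e S r w -> r != w -> diblock e S r w.
Proof.
case=> p [q [hp hq hd]] hrw; split; first exact: dpath_end hp.
right; have [hpq|hpq] := eqVneq p q; last first.
  right; exists p, q; split=> //; first exact/eqP.
  move=> v [hvp [hvr hvw]] [hvq _]; apply: hvw; apply: hd.
  - by move: hvp; rewrite inE => /orP [/eqP|].
  - by move: hvq; rewrite inE => /orP [/eqP|].
(* a path sharing only [w] with itself is the single arc [r w] *)
subst q; left; have [c [t [hpe hrc _ _]]] := dpath_head hp hrw; subst p.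
have hc : c = w by apply: hd; rewrite inE eqxx.
subst c; case: t hp hd {hq} => [//|c t] [_ _ hu _] hd.
have hc : c = w by apply: hd; rewrite !inE eqxx orbT.
by subst c; move: hu => /= /andP [_ /andP []]; rewrite inE eqxx.
Qed.

(* the induction measure: [H[S]] has at most [n] vertices *)
Definition covered S n := exists2 l : seq T, size l <= n & forall v, S v -> v \in l.

Lemma covered0 S v : covered S 0 -> ~ S v.
Proof. by case=> [[|//]] _ /[apply]. Qed.

Lemma covered_card S : covered S #|T|.
Proof. by exists (enum T) => [|v _]; rewrite ?cardE ?mem_enum. Qed.

Lemma covered_del S S' n s : covered S n.+1 -> S s ->
  (forall v, S' v -> S v /\ v <> s) -> covered S' n.
Proof.
case=> l hl hSl hs hS'; exists (filter (predC1 s) l); last first.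
  by move=> v /hS' [/hSl hv /eqP hvs]; rewrite mem_filter /= hvs.
have hpos : 0 < count (predC (predC1 s)) l.
  by rewrite -has_count; apply/hasP; exists s; rewrite /= ?eqxx ?hSl.
rewrite size_filter -ltnS; apply: leq_trans hl.
by rewrite -(count_predC (predC1 s) l) -addn1 leq_add2l.
Qed.

(* [a] also receives the out-arcs of [s]; with [s] deleted, this is the
   contraction of the arc [s a] as seen by paths leaving [s]. *)
Definition contract e s a : rel T := fun x y => e x y || (x == a) && e s y.

Lemma path_contract e s a x p :
  path (contract e s a) x p -> a \notin x :: p -> path e x p.
Proof.
elim: p x => [//|y p IH] x /= /andP [hxy hp]; rewrite !inE negb_or => /andP [hxa hr].
rewrite (IH y hp hr) andbT; move: hxy; rewrite /contract.
by rewrite eq_sym in hxa; rewrite (negbTE hxa) orbF.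
Qed.

Lemma dpath_contract e S s a w p : dpath e S s w p -> s != w -> e s a -> S a -> a != s ->
  exists2 p', dpath (contract e s a) (fun v => S v /\ v <> s) a w p' & {subset p' <= p}.
Proof.
move=> hp hsw hsa hSa has; have [b [t [hpe hsb _ _]]] := dpath_head hp hsw; subst p.
case: hp => hp hl hu hS.
have hp' : path (contract e s a) a (b :: t).
  move: hp => /= /andP [_ hbt]; rewrite /contract eqxx hsb orbT /=.
  by apply: sub_path hbt => x y h; rewrite /contract h.
have [|p' hd hsub] := dpath_shorten (S := fun v => S v /\ v <> s) hp'.
  move=> v; rewrite inE => /orP [/eqP -> | hv]; first by split=> //; apply/eqP.
  split; first by apply: hS; rewrite inE hv orbT.
  by move=> hvs; move: hu; rewrite /= -hvs hv.
by exists p' => //; rewrite -hl.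
Qed.

Lemma dpath_uncontract e S s a w p : S s ->
  dpath (contract e s a) (fun v => S v /\ v <> s) a w p -> a != w ->
  [/\ dpath e S s w p \/ dpath e S a w p, a \notin p & s \notin p].
Proof.
move=> hs hp haw; have [b [t [hpe _ _ _]]] := dpath_head hp haw; subst p.
case: hp => hp hl hu hS.
have hSp v : v \in b :: t -> S v /\ v <> s by move=> hv; apply: hS; rewrite inE hv orbT.
have hsp : s \notin b :: t by apply/negP => /hSp [].
have hap : a \notin b :: t by case/andP: hu.
split=> //; move: hp => /= /andP [hab hbt].
have {}hbt : path e b t := path_contract hbt hap.
move: hab; rewrite /contract eqxx /= => /orP [hab|hsb]; [right|left]; split=> //=.
- by rewrite hab.
- by move=> v; rewrite inE => /orP [/eqP ->|/hSp []//]; case: (hS a); rewrite ?inE ?eqxx.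
- by rewrite hsb.
- by rewrite hsp; case/andP: hu.
- by move=> v; rewrite inE => /orP [/eqP ->|/hSp []].
Qed.

Lemma mixed_two_paths e S s a w P Q : e s a -> S s -> s != a ->
  dpath e S s w P -> dpath e S a w Q -> a \notin P -> s \notin Q ->
  (forall v, v \in P -> v \in Q -> v = w) -> two_paths e S s w.
Proof.
move=> hsa hs hsna hP hQ haP hsQ hd; exists P, (a :: Q); split=> //.
- have hSa : S a by case: hQ => _ _ _; apply; rewrite inE eqxx.
  apply: (dpath_cat (dpath_arc hsa hs hSa hsna) hQ) => v hv.
  rewrite !inE negb_or; apply/andP; split; first by apply: contraNneq hsQ => <-.
  by case: hQ => _ _ /andP [+ _] _; apply: contraNneq => <-.
- move=> v hvP; rewrite inE => /orP [/eqP hva|]; last exact: hd.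
  by move: haP; rewrite -hva hvP.
Qed.

Lemma two_paths_reroute_aux e S s a w P Q C1 c C2 P1 P2 : S s -> e s a ->
  dpath e S a w P -> dpath e S a w Q -> (forall v, v \in P -> v \in Q -> v = w) ->
  path e s (rcons C1 c ++ C2) -> (forall v, v \in rcons C1 c ++ C2 -> S v) ->
  a \notin rcons C1 c ++ C2 -> ~~ has (mem (P ++ Q)) C1 -> P = P1 ++ c :: P2 ->
  two_paths e S s w.
Proof.
move=> hs hsa [hpP hlP huP hSP] [hpQ hlQ _ hSQ] hd hC hSC haC hC1 hPe.
have haP : a \notin P by case/andP: huP.
have hP2 : {subset c :: P2 <= P} by move=> v hv; rewrite hPe mem_cat hv orbT.
apply: (@walks_two_paths e S s w (rcons C1 c ++ P2) (a :: Q)) => //=.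
- rewrite cat_path; move: hC; rewrite cat_path => /andP [-> _] /=.
  by move: hpP; rewrite hPe cat_path last_rcons => /andP [_ /= /andP [_ ->]].
- by rewrite hsa hpQ.
- by rewrite last_cat last_rcons -hlP hPe last_cat.
- move=> v; rewrite inE mem_cat => /orP [/eqP -> //|/orP [hv|hv]].
    by apply: hSC; rewrite mem_cat hv.
  by apply: hSP; rewrite inE hP2 ?inE ?hv ?orbT.
- by move=> v; rewrite inE => /orP [/eqP -> //|]; exact: hSQ.
- move=> v; rewrite mem_cat mem_rcons inE -orbA => /or3P [/eqP -> | hv1 | hv2];
    rewrite inE => /orP [/eqP hva | hvQ].
  + by move: haP; rewrite -hva hP2 ?inE ?eqxx.
  + by apply: hd hvQ; rewrite hP2 ?inE ?eqxx.
  + by move: haC; rewrite -hva mem_cat mem_rcons inE hv1 orbT.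
  + by move/hasPn: hC1 => /(_ v hv1); rewrite /= mem_cat hvQ orbT.
  + by move: haP; rewrite -hva hP2 ?inE ?hv2 ?orbT.
  + by apply: hd hvQ; rewrite hP2 ?inE ?hv2 ?orbT.
Qed.

(* Follow [C] up to its first vertex on [P] or [Q] and go on along that path;
   the other one is reached through the arc [s a]. *)
Lemma two_paths_reroute e S s a w P Q C : S s -> e s a ->
  dpath e S a w P -> dpath e S a w Q -> (forall v, v \in P -> v \in Q -> v = w) ->
  dpath e S s w C -> a \notin C -> s != w -> two_paths e S s w.
Proof.
move=> hs hsa hP hQ hd hC haC hsw.
have hwC := dpath_mem_last hC hsw.
have haw : a != w by apply: contraNneq haC => ->.
have hwP := dpath_mem_last hP haw.
have : has (mem (P ++ Q)) C by apply/hasP; exists w => //=; rewrite mem_cat hwP.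
case/split_first => c [C1 [C2 [hCe hc hC1]]]; subst C.
case: hC => hpC _ _ hSC.
have hSC' v : v \in rcons C1 c ++ C2 -> S v.
  by move=> hv; apply: hSC; rewrite inE hv orbT.
move: hc; rewrite /= mem_cat => /orP [hc|hc].
- have [P1 [P2 hPe]] := split_at hc.
  exact: (two_paths_reroute_aux hs hsa hP hQ hd hpC hSC' haC hC1 hPe).
- have [Q1 [Q2 hQe]] := split_at hc.
  apply: (two_paths_reroute_aux hs hsa hQ hP _ hpC hSC' haC _ hQe).
  + by move=> v hvQ hvP; apply: hd.
  + apply/hasPn => v hv; move/hasPn: hC1 => /(_ v hv); by rewrite /= !mem_cat orbC.
Qed.

(* Menger's theorem for two paths, by induction on the number of vertices:
   contract the first arc [s a] of an [s]-[w] path. *)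
Lemma two_paths_nocut n e S s w : covered S n -> S s -> s != w ->
  (exists p, dpath e S s w p) ->
  (forall z, z != s -> z != w -> exists2 p, dpath e S s w p & z \notin p) ->
  two_paths e S s w.
Proof.
elim: n e S s w => [|n IH] e S s w hcov hs hsw [p0 hp0] hnocut.
  by case: (covered0 hcov hs).
have [hsw'|hsw'] := boolP (e s w).
  exact: arc_two_paths hsw' hs (dpath_end hp0).
have [a [t [_ hsa hSa has]]] := dpath_head hp0 hsw.
have haw : a != w by apply: contraNneq hsw' => <-.
have [C hC haC] := hnocut a has haw.
have [P [Q [hP hQ hd]]] : two_paths (contract e s a) (fun v => S v /\ v <> s) a w.
  apply: IH => //.
  - exact: covered_del hcov hs _.
  - by split=> //; apply/eqP.
  - by have [p' hp' _] := dpath_contract hp0 hsw hsa hSa has; exists p'.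
  - move=> z hza hzw; have [hzs|hzs] := eqVneq z s.
      have [p' hp' _] := dpath_contract hp0 hsw hsa hSa has; exists p' => //.
      subst z; apply/negP => hsp'; case: hp' => _ _ _ /(_ s).
      by rewrite inE hsp' orbT => /(_ isT) [].
    have [pz hpz hz] := hnocut z hzs hzw.
    have [p' hp' hsub] := dpath_contract hpz hsw hsa hSa has; exists p' => //.
    by apply: contra hz => /hsub.
have [[hP'|hP'] haP hsP] := dpath_uncontract hs hP haw;
  have [[hQ'|hQ'] haQ hsQ] := dpath_uncontract hs hQ haw.
- by exists P, Q.
- by apply: mixed_two_paths hP' hQ' _ _ hd; rewrite // eq_sym.
- apply: mixed_two_paths hQ' hP' _ _ _; rewrite 1?eq_sym //.
  by move=> v hvQ hvP; apply: hd.
- exact: two_paths_reroute hs hsa hP' hQ' hd hC haC hsw.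
Qed.

Lemma two_paths_extend e S r x w z q : two_paths e S r x -> path e x q ->
  last x q = w -> (forall v, v \in q -> S v) -> z != x -> z \notin q ->
  exists2 p, dpath e S r w p & z \notin p.
Proof.
move=> [pa [pb [hpa hpb hd]]] hq hl hSq hzx hzq.
have avoid p : dpath e S r x p -> z \notin p ->
    exists2 p', dpath e S r w p' & z \notin p'.
  move=> hp hzp; have [p' hp' hsub] := dpath_extend hp hq hl hSq.
  exists p' => //; apply/negP => /hsub.
  by rewrite mem_cat (negbTE hzp) (negbTE hzq).
have [hza|] := boolP (z \in pa); last exact: avoid.
apply: avoid hpb _; apply: contra hzx => hzb; exact/eqP/hd.
Qed.

(* Two exits [x1], [x2] from the diblock towards [w] leave no vertex separating
   [r] from [w]: such a vertex would lie on both exits' tails. *)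
Lemma two_exits_two_paths e S r x1 x2 s1 s2 w : S r ->
  diblock e S r x1 -> diblock e S r x2 -> x1 != x2 ->
  path e x1 (rcons s1 w) -> path e x2 (rcons s2 w) ->
  (forall v, v \in rcons s1 w -> S v /\ ~ diblock e S r v) ->
  (forall v, v \in rcons s2 w -> S v /\ ~ diblock e S r v) ->
  (forall v, v \in s1 -> v \notin s2) -> two_paths e S r w.
Proof.
move=> hr hB1 hB2 hne hq1 hq2 hn1 hn2 hdis.
have hw1 : w \in rcons s1 w by rewrite mem_rcons inE eqxx.
have hrw : r != w.
  by apply/eqP => hrw; apply: (proj2 (hn1 w hw1)); rewrite -hrw; exact: diblock_root.
have hS1 v : v \in rcons s1 w -> S v by move/hn1 => [].
have hS2 v : v \in rcons s2 w -> S v by move/hn2 => [].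
have [hP1 hP2] := (diblock_two_paths hr hB1, diblock_two_paths hr hB2).
apply: two_paths_nocut (covered_card S) hr hrw _ _.
  have [pa [_ [hpa _ _]]] := hP1.
  by have [p hp _] := dpath_extend hpa hq1 (last_rcons _ _ _) hS1; exists p.
move=> z hzr hzw.
have [hz1|hz1] := boolP ((z == x1) || (z \in s1)); last first.
  move: hz1; rewrite negb_or => /andP [hzx1 hzs1].
  apply: two_paths_extend hP1 hq1 (last_rcons _ _ _) hS1 hzx1 _.
  by rewrite mem_rcons inE negb_or hzw.
have [hz2|hz2] := boolP ((z == x2) || (z \in s2)); last first.
  move: hz2; rewrite negb_or => /andP [hzx2 hzs2].
  apply: two_paths_extend hP2 hq2 (last_rcons _ _ _) hS2 hzx2 _.
  by rewrite mem_rcons inE negb_or hzw.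
exfalso; move: hz1 hz2 => /orP [/eqP hzx1|hzs1] /orP [/eqP hzx2|hzs2].
- by move: hne; rewrite -hzx1 -hzx2 eqxx.
- by apply: (proj2 (hn2 x1 _)) hB1; rewrite mem_rcons inE -hzx1 hzs2 orbT.
- by apply: (proj2 (hn1 x2 _)) hB2; rewrite mem_rcons inE -hzx2 hzs1 orbT.
- by move: (hdis z hzs1); rewrite hzs2.
Qed.

Lemma last_exit_unique e S r x1 x2 q1 q2 : S r ->
  diblock e S r x1 -> diblock e S r x2 ->
  path e x1 q1 -> path e x2 q2 -> last x1 q1 = last x2 q2 ->
  (forall v, v \in q1 -> S v /\ ~ diblock e S r v) ->
  (forall v, v \in q2 -> S v /\ ~ diblock e S r v) -> x1 = x2.
Proof.
move=> hr hB1 hB2 hq1 hq2 hl hn1 hn2; apply/eqP/negPn/negP => hne.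
have [hq1e|hq1ne] := eqVneq q1 [::].
  have [hq2e|hq2ne] := eqVneq q2 [::].
    by move: hl hne; rewrite hq1e hq2e /= => ->; rewrite eqxx.
  by apply: (proj2 (hn2 _ (mem_last_nonnil x2 hq2ne))); rewrite -hl hq1e.
have hw1 := mem_last_nonnil x1 hq1ne.
have [hq2e|hq2ne] := eqVneq q2 [::].
  by apply: (proj2 (hn1 _ hw1)); rewrite hl hq2e.
have : has (mem q2) q1.
  by apply/hasP; exists (last x1 q1); rewrite //= hl mem_last_nonnil.
case/split_first => w [s1 [t1 [hq1e hwq2 hs1]]].
have [s2 [t2 hq2e]] := split_at hwq2.
have hw1' : w \in q1 by rewrite hq1e mem_cat mem_rcons inE eqxx.
apply: (proj2 (hn1 w hw1')); apply: two_paths_diblock.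
- apply: (two_exits_two_paths hr hB1 hB2 hne (s1 := s1) (s2 := s2)).
  + by move: hq1; rewrite hq1e cat_path => /andP [].
  + by move: hq2; rewrite hq2e -cat_rcons cat_path => /andP [].
  + by move=> v hv; apply: hn1; rewrite hq1e mem_cat hv.
  + by move=> v hv; apply: hn2; rewrite hq2e -cat_rcons mem_cat hv.
  + move=> v hv; move/hasPn: hs1 => /(_ v hv); apply: contra => hv2.
    by rewrite /= hq2e mem_cat hv2.
- by apply/eqP => hrw; apply: (proj2 (hn1 w hw1')); rewrite -hrw; exact: diblock_root.
Qed.

Lemma exists_last_in (B : T -> Prop) r p : B r -> exists x, last_in B r p x.
Proof.
move=> hBr; elim/last_ind: p => [|p z [x [p1 [p2 [he hBx hn]]]]].
  by exists r, [::], [::].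
have [hBz|hBz] := classic (B z).
  by exists z, (r :: p), [::]; rewrite -cats1.
exists x, p1, (rcons p2 z); split=> //; first by rewrite -rcons_cons he rcons_cat.
by move=> w; rewrite mem_rcons inE => /orP [/eqP -> //|/hn].
Qed.

Lemma last_in_tail e S r w p x : dpath e S r w p -> last_in (diblock e S r) r p x ->
  exists q, [/\ diblock e S r x, path e x q, last x q = w &
                forall v, v \in q -> S v /\ ~ diblock e S r v].
Proof.
case=> hp hl _ hS [p1 [p2 [he hBx hn]]]; have [hp2 hl2 hsub] := path_suffix he hp.
exists p2; split=> //; first by rewrite hl2.
by move=> v hv; split; [apply/hS/hsub; rewrite inE hv orbT | exact: hn].
Qed.

Lemma Xset_of_tail e S r x q : S r -> diblock e S r x -> path e x q ->
  (forall v, v \in q -> S v /\ ~ diblock e S r v) -> q != [::] ->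
  Xset e S r x (last x q).
Proof.
move=> hr hBx hq hn hq0; have [hSw hnBw] := hn _ (mem_last_nonnil x hq0).
split=> // p hp; have [y hy] := exists_last_in p (diblock_root e hr).
have [q' [hBy hq' hl' hn']] := last_in_tail hp hy.
suff <- : y = x by [].
exact: last_exit_unique hr hBy hBx hq' hq hl' hn' hn.
Qed.

Lemma bottleneck_of_last_in e S r u p x : S r -> ~ diblock e S r u ->
  dpath e S r u p -> last_in (diblock e S r) r p x ->
  bottleneck e S r x /\ Xset e S r x u.
Proof.
move=> hr hBu hp hx; have [q [hBx hq hl hn]] := last_in_tail hp hx.
have hq0 : q != [::] by apply: contra_not_neq hBu => hq0; rewrite -hl hq0.
have hXu : Xset e S r x u by rewrite -hl; exact: Xset_of_tail.
split=> //; split=> //; last by exists u.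
case: q hq hn hq0 {hl} => [//|b t] /= /andP [hxb _] hn _ hxr; subst x.
have [hSb hnBb] := hn b (mem_head b t).
by apply: hnBb; split; [|right; left].
Qed.

Lemma Xset_reachable e S r x v : S r ->
  (forall w, S w -> exists p, dpath e S r w p) -> Xset e S r x v ->
  exists p, dpath e (fun w => Xset e S r x w \/ w = x) x v p.
Proof.
move=> hr hreach [hSv hnBv hall]; have [P hP] := hreach v hSv.
have [q [hBx hq hl hn]] := last_in_tail hP (hall P hP).
have [|p hp _] := dpath_shorten (S := fun w => Xset e S r x w \/ w = x) hq.
  move=> w; rewrite inE => /orP [/eqP ->|hw]; [by right | left].
  have [q1 [q2 hqe]] := split_at hw.
  rewrite -(last_rcons x q1 w); apply: Xset_of_tail => //.
  - by move: hq; rewrite hqe -cat_rcons cat_path => /andP [].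
  - by move=> u hu; apply: hn; rewrite hqe -cat_rcons mem_cat hu.
  - by case: q1 {hqe}.
by exists p; rewrite -hl.
Qed.

Lemma dpath_prefix e S a b p1 c p2 :
  dpath e S a b (p1 ++ c :: p2) -> dpath e S a c (rcons p1 c).
Proof.
rewrite -cat_rcons; case=> hp _ hu hS; split; rewrite ?last_rcons //.
- by move: hp; rewrite cat_path => /andP [].
- by move: hu; rewrite -cat_cons cat_uniq => /andP [].
- by move=> v hv; apply: hS; rewrite -cat_cons mem_cat hv.
Qed.

(* An [r]-[x] path cannot pass through [X_x] before reaching [x]: its prefix
   would be a path to that vertex missing [x]. *)
Lemma dpath_notin_Xset e S r x q v : dpath e S r x q -> v \in q -> v != x ->
  ~ Xset e S r x v.
Proof.
move=> hq hvq hvx [_ _ hall]; have [q1 [q2 hqe]] := split_at hvq; subst q.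
have [m1 [m2 [he _ _]]] := hall _ (dpath_prefix hq).
have hx1 : x \in r :: q1.
  move: (mem_cat x m1 (x :: m2)); rewrite -he mem_head orbT.
  by rewrite !inE mem_rcons inE (eq_sym x v) (negbTE hvx).
case: hq => _ hl hu _.
have hx2 : x \in v :: q2 by rewrite -hl last_cat /=; exact: mem_last.
move: hu; rewrite -cat_cons cat_uniq => /and3P [_ /hasPn /(_ x hx2)].
by rewrite hx1.
Qed.

Lemma two_paths_half e S r y (X : {set T}) : two_paths e S r y ->
  r \notin X -> y \notin X ->
  exists p (Z : {set T}), [/\ dpath e S r y p,
    forall v, v \in Z -> exists2 q, dpath e S r y q & v \in q &
    2 * #|[set v in X | v \in r :: p]| <= #|X :&: Z|].
Proof.
move=> [pa [pb [hpa hpb hd]]] hrX hyX.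
pose Z := [set v | (v \in pa) || (v \in pb)].
pose A p := [set v in X | v \in r :: p].
have hA p : A p = [set v in X | v \in p].
  apply/setP => v; rewrite !inE; have [->|] := eqVneq v r; last by [].
  by rewrite (negbTE hrX).
have hAB : #|A pa| + #|A pb| <= #|X :&: Z|.
  rewrite -cardsUI !hA.
  have -> : [set v in X | v \in pa] :&: [set v in X | v \in pb] = set0.
    apply/setP => v; rewrite !inE.
    apply/negP => /andP [/andP [hvX hva] /andP [_ hvb]].
    by move: hyX; rewrite -(hd v hva hvb) hvX.
  rewrite cards0 addn0; apply/subset_leq_card/subsetP => v.
  by rewrite !inE => /orP [] /andP [-> ->]; rewrite ?orbT.
have hZ v : v \in Z -> exists2 q, dpath e S r y q & v \in q.
  by rewrite inE => /orP [hv|hv]; [exists pa | exists pb].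
have [hle|hlt] := leqP #|A pa| #|A pb|; [exists pa | exists pb];
  exists Z; split=> //; rewrite -/(A _); lia.
Qed.

Lemma double_card_split (X Z A B C : {set T}) : C \subset A :|: B ->
  2 * #|A| <= #|X :&: Z| -> 2 * #|B| <= #|X :\: Z| -> 2 * #|C| <= #|X|.
Proof.
move=> hC hA hB; rewrite -(cardsID Z X).
have := subset_leq_card hC; have := cardsUI A B; lia.
Qed.

Lemma cut_decomposition_path e n S r : covered S n -> S r ->
  (forall v, S v -> exists p, dpath e S r v p) ->
  forall u (X : {set T}), S u ->
  (forall v, v \in X -> ~ tree_vertex e S r v /\ v <> u) ->
  exists p, dpath e S r u p /\ 2 * #|[set v in X | v \in r :: p]| <= #|X|.
Proof.
elim: n S r => [|n IH] S r hcov hr hreach u X hu hX.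
  by case: (covered0 hcov hr).
have hrX : r \notin X by apply/negP => /hX [+ _]; apply; exact: tv_root.
have [hBu|hBu] := classic (diblock e S r u).
  have huX : u \notin X by apply/negP => /hX [_]; apply.
  have [p [Z [hp _ hc]]] := two_paths_half (diblock_two_paths hr hBu) hrX huX.
  by exists p; split=> //; apply: leq_trans hc (subset_leq_card (subsetIl X Z)).
have [P hP] := hreach u hu; have [x hx] := exists_last_in P (diblock_root e hr).
have [hbot hXu] := bottleneck_of_last_in hr hBu hP hx.
have [hBx _ _] := hbot.
have hxX : x \notin X.
  by apply/negP => /hX [+ _]; apply; exact: tv_child hbot (tv_root _ _ _).
have [p [Z [hp hZ hcp]]] := two_paths_half (diblock_two_paths hr hBx) hrX hxX.
pose S' w := Xset e S r x w \/ w = x.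
have hS' w : S' w -> S w /\ w <> r.
  case=> [[hSw hnBw _]|->]; last by case: hBx => hSx _; split=> //; case: hbot.
  by split=> // hwr; apply: hnBw; rewrite hwr; exact: diblock_root.
have [q [hq hcq]] : exists q, dpath e S' x u q /\
    2 * #|[set v in X :\: Z | v \in x :: q]| <= #|X :\: Z|.
  apply: IH; rewrite /S'; [exact: covered_del hcov hr hS'|by right| |by left|].
  - move=> v [hv|->]; first exact: Xset_reachable hr hreach hv.
    by exists [::]; split=> // w; rewrite inE => /eqP ->; right.
  - move=> v; rewrite inE => /andP [_ /hX [htv hvu]]; split=> // htv'.
    exact: htv (tv_child hbot htv').
(* the vertices of [q] after [x] lie in [X_x], hence on no [r]-[x] path *)
have hqX v : v \in q -> Xset e S r x v /\ v != x.
  move=> hv; case: hq => _ _ /andP [hxq _] hSq; have hvx : v != x.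
    by apply: contraNneq hxq => <-.
  by case: (hSq v); rewrite ?inE ?hv ?orbT // => /eqP; rewrite (negbTE hvx).
have hq_off_p v : v \in q -> v \notin r :: p.
  move=> /hqX [hXv hvx]; rewrite inE negb_or; apply/andP; split.
    apply/eqP => hvr; case: hXv => _ + _.
    by rewrite hvr; apply; exact: diblock_root.
  by apply/negP => hvp; exact: dpath_notin_Xset hp hvp hvx hXv.
exists (p ++ q); split.
  apply: dpath_cat hp _ hq_off_p.
  by apply: dpath_weaken hq => w /hS' [].
apply: double_card_split hcp hcq; apply/subsetP => v; rewrite !inE mem_cat.
case/andP => -> /or3P [-> | -> | hvq]; rewrite ?orbT //.
have [hXv hvx] := hqX v hvq.
suff -> : v \notin Z by rewrite hvq !orbT.
by apply/negP => /hZ [p' hp' hvp']; exact: dpath_notin_Xset hp' hvp' hvx hXv.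
Qed.

End CutDecomposition.

Theorem corollary2 (T : finType) (e : rel T) (r : T) :
  irreflexive e ->
  2 <= #|T| ->
  (forall v, exists p, dpath e (fun _ => True) r v p) ->
  forall (u : T) (X : {set T}),
    (forall v, v \in X -> ~ tree_vertex e (fun _ => True) r v /\ v <> u) ->
    exists p, dpath e (fun _ => True) r u p /\
      2 * #|[set v in X | v \in r :: p]| <= #|X|.
Proof.
move=> _ _ hreach u X hX.
exact: cut_decomposition_path (covered_card _) _ (fun v _ => hreach v) u X _ hX.
Qed.
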